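(* Let $\bm{W}_0$ and $\widetilde{\bm{W}}$ be real $(d+2)\times(d+2)$ matrices (indexed $0,\ldots,d+1$) whose directed graphs are both acyclic. Suppose that for every $j\in\{0,\ldots,d+1\}$, every parent of $j$ in the directed graph of $\bm{W}_0$ is an ancestor of $j$ in the directed graph of $\widetilde{\bm{W}}$. Then for every $j\in\{0,\ldots,d+1\}$, no descendant of $j$ in the directed graph of $\bm{W}_0$ is an ancestor of $j$ in the directed graph of $\widetilde{\bm{W}}$.
   Context: For a matrix $\bm{W}$, its directed graph has vertex set $\{0,\ldots,d+1\}$ and an arrow $i\to j$ iff $W_{j,i}\neq 0$; $i$ is a parent of $j$ if $i\to j$; $i$ is an ancestor of $j$ (and $j$ a descendant of $i$) if there is a directed path from $i$ to $j$ through distinct nodes with at least one step. *)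

From mathcomp Require Import all_boot all_order all_algebra.
From mathcomp Require Import reals.
Set Implicit Arguments. Unset Strict Implicit. Unset Printing Implicit Defensive.
Import GRing.Theory Num.Theory.
Local Open Scope ring_scope.

Definition arrow (R : ringType) (n : nat) (W : 'M[R]_n) : rel 'I_n :=
  fun i j => W j i != 0.

Definition parent (R : ringType) (n : nat) (W : 'M[R]_n) (i j : 'I_n) : Prop :=
  arrow W i j.

Definition ancestor (R : ringType) (n : nat) (W : 'M[R]_n) (i j : 'I_n) : Prop :=
  exists p : seq 'I_n,
    [/\ p != [::], path (arrow W) i p, last i p = j & uniq (i :: p)].

Definition descendant (R : ringType) (n : nat) (W : 'M[R]_n) (j i : 'I_n) : Prop :=
  ancestor W i j.

(* Acyclic: no directed cycle (including self-loops). A directed cycle is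
   a path of distinct nodes i :: p followed by an arrow back to i. *)
Definition acyclic (R : ringType) (n : nat) (W : 'M[R]_n) : Prop :=
  ~ exists (i : 'I_n) (p : seq 'I_n),
      [/\ path (arrow W) i p, uniq (i :: p) & arrow W (last i p) i].

(** Every arrow of [W0] is realised by a directed path of [Wt], so a
    [W0]-path from [j] to a descendant [k] yields a [Wt]-walk from [j] to [k].
    If [k] were also a [Wt]-ancestor of [j], the two would close a directed
    cycle in [Wt]. *)

From mathcomp Require Import all_boot all_order all_algebra.
From mathcomp Require Import reals.
Set Implicit Arguments. Unset Strict Implicit.

Section Ancestors.

Variables (R : ringType) (n : nat) (W : 'M[R]_n).

Lemma ancestor_arrow_connect a b :
  ancestor W a b -> exists2 c, arrow W a c & connect (arrow W) c b.
Proof.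
case=> -[|c p] [//= _ /andP[ac cp] <- _].
by exists c => //; apply/connectP; exists p.
Qed.

Lemma ancestor_connect a b : ancestor W a b -> connect (arrow W) a b.
Proof.
by case/ancestor_arrow_connect=> c ac cb; apply: connect_trans (connect1 ac) cb.
Qed.

Lemma acyclic_arrow_connect x y :
  acyclic W -> arrow W x y -> ~~ connect (arrow W) y x.
Proof.
move=> acW xy; apply/negP => /connectP[p yp px].
case: (shortenP yp) px => q yq uq _ qx.
by apply: acW; exists y, q; rewrite -qx.
Qed.

Lemma acyclic_ancestor_connect a b :
  acyclic W -> ancestor W a b -> ~~ connect (arrow W) b a.
Proof.
move=> acW /ancestor_arrow_connect[c ac cb]; apply/negP => ba.
by move: (acyclic_arrow_connect acW ac); rewrite (connect_trans cb ba).
Qed.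

End Ancestors.

Theorem lemma5 (R : realType) (d : nat) (W0 Wt : 'M[R]_(d.+2)) :
  acyclic W0 -> acyclic Wt ->
  (forall j i : 'I_(d.+2), parent W0 i j -> ancestor Wt i j) ->
  forall j : 'I_(d.+2),
    ~ exists k : 'I_(d.+2), descendant W0 k j /\ ancestor Wt k j.
Proof.
move=> _ acWt parent_anc j [k [/ancestor_connect jk0 kj]].
have arrow0_connect : subrel (arrow W0) (connect (arrow Wt)).
  by move=> x y xy; apply/ancestor_connect/parent_anc.
have jk := connect_sub arrow0_connect jk0.
by move: (acyclic_ancestor_connect acWt kj); rewrite jk.
Qed.
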